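(* (1) The region $\mathcal R(D_x,D_z)$ is convex. (2) The region $\mathcal R(D_x,D_z)$ is unchanged if, in its definition, the auxiliary alphabets are restricted to satisfy $|\mathcal U|\le|\mathcal Y|+4$, $|\mathcal V|\le|\mathcal Z||\mathcal U|+3$, $|\mathcal W|\le|\mathcal U||\mathcal V||\mathcal X|+1$.
   Context: Let $\mathcal X,\mathcal Y,\mathcal Z$ be finite alphabets and $(X,Y,Z)\sim p(x,y,z)=p(x,y)p(z|x)$ (so $Y-X-Z$ is Markov). Let $\hat{\mathcal X},\hat{\mathcal Z}$ be finite alphabets and $d_x:\mathcal X\times\hat{\mathcal X}\to[0,\infty)$, $d_z:\mathcal Z\times\hat{\mathcal Z}\to[0,\infty)$. $\mathcal R(D_x,D_z)$ is the set of all rate triples $(R_1,R_2,R_3)$ such that $R_1\ge I(Y;U|Z)$, $R_2\ge I(Z;V|U,X)$, $R_3\ge I(X;W|U,V,Z)$ for some finite-alphabet random variables $U\in\mathcal U,V\in\mathcal V,W\in\mathcal W$ with joint distribution $p(x,y,z,u,v,w)=p(x,y)p(z|x)p(u|y)p(v|u,z)p(w|u,v,x)$ and deterministic functions $\hat X(U,W,Z)$, $\hat Z(U,V,X)$ with $\mathbb E\, d_x(X,\hat X(U,W,Z))\le D_x$ and $\mathbb E\, d_z(Z,\hat Z(U,V,X))\le D_z$. *)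

From HB Require Import structures.
From mathcomp Require Import all_boot all_order all_algebra.
From mathcomp Require Import Rstruct.
From Stdlib Require Rdefinitions Rpower.

Set Implicit Arguments.
Unset Strict Implicit.
Unset Printing Implicit Defensive.
Import Order.TTheory GRing.Theory Num.Theory.
Local Open Scope ring_scope.

Notation R := Rdefinitions.R.

Definition log2 (x : R) : R := Rpower.ln x / Rpower.ln 2.

Definition pmf (T : finType) (p : T -> R) : Prop :=
  (forall t, 0 <= p t) /\ \sum_(t : T) p t = 1.

Definition channel (A B : finType) (k : A -> B -> R) : Prop :=
  forall a, pmf (k a).

Definition prob (O : finType) (P : O -> R) (E : pred O) : R :=
  \sum_(o | E o) P o.

Definition expect (O : finType) (P : O -> R) (f : O -> R) : R :=
  \sum_(o : O) P o * f o.

Definition cmi (O : finType) (P : O -> R) (TA TB TC : finType)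
    (A : O -> TA) (B : O -> TB) (C : O -> TC) : R :=
  \sum_(a : TA) \sum_(b : TB) \sum_(c : TC)
    let pabc := prob P (fun o => [&& A o == a, B o == b & C o == c]) in
    let pac := prob P (fun o => (A o == a) && (C o == c)) in
    let pbc := prob P (fun o => (B o == b) && (C o == c)) in
    let pc := prob P (fun o => C o == c) in
    if 0 < pabc then pabc * log2 (pabc * pc / (pac * pbc)) else 0.

Section Region.
Variables (X Y Z Xh Zh : finType).
Variables (pxy : X -> Y -> R) (pzx : X -> Z -> R).
Variables (dx : X -> Xh -> R) (dz : Z -> Zh -> R) (Dx Dz : R).

Definition joint (U V W : finType) (pu : Y -> U -> R) (pv : U -> Z -> V -> R)
    (pw : U -> V -> X -> W -> R) (o : X * Y * Z * U * V * W) : R :=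
  let: (x, y, z, u, v, w) := o in
  pxy x y * pzx x z * pu y u * pv u z v * pw u v x w.

Definition oX U V W (o : X * Y * Z * U * V * W) : X := let: (x,_,_,_,_,_) := o in x.
Definition oY U V W (o : X * Y * Z * U * V * W) : Y := let: (_,y,_,_,_,_) := o in y.
Definition oZ U V W (o : X * Y * Z * U * V * W) : Z := let: (_,_,z,_,_,_) := o in z.
Definition oU U V W (o : X * Y * Z * U * V * W) : U := let: (_,_,_,u,_,_) := o in u.
Definition oV U V W (o : X * Y * Z * U * V * W) : V := let: (_,_,_,_,v,_) := o in v.
Definition oW U V W (o : X * Y * Z * U * V * W) : W := let: (_,_,_,_,_,w) := o in w.

Definition achievable (U V W : finType) (r : R * R * R) : Prop :=
  exists (pu : Y -> U -> R) (pv : U -> Z -> V -> R) (pw : U -> V -> X -> W -> R)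
         (xhat : U -> W -> Z -> Xh) (zhat : U -> V -> X -> Zh),
    [/\ channel pu, (forall u, channel (pv u)), (forall u v, channel (pw u v)) &
      let P := joint pu pv pw in
      [/\ cmi P (@oY U V W) (@oU U V W) (@oZ U V W) <= r.1.1,
          cmi P (@oZ U V W) (@oV U V W) (fun o => (oU o, oX o)) <= r.1.2,
          cmi P (@oX U V W) (@oW U V W) (fun o => (oU o, oV o, oZ o)) <= r.2,
          expect P (fun o => dx (oX o) (xhat (oU o) (oW o) (oZ o))) <= Dx &
          expect P (fun o => dz (oZ o) (zhat (oU o) (oV o) (oX o))) <= Dz]].

Definition region (r : R * R * R) : Prop :=
  exists U V W : finType, achievable U V W r.

Definition region_card (r : R * R * R) : Prop :=
  exists U V W : finType,
    [/\ #|U| <= #|Y| + 4, #|V| <= #|Z| * #|U| + 3,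
        #|W| <= #|U| * #|V| * #|X| + 1 & achievable U V W r]%N.

End Region.

From HB Require Import structures.
From mathcomp Require Import all_boot all_order all_algebra.
From mathcomp Require Import Rstruct.
From mathcomp Require Import ring lra.
Import Order.TTheory GRing.Theory Num.Theory.
Local Open Scope ring_scope.
Set Implicit Arguments. Unset Strict Implicit. Unset Printing Implicit Defensive.

(* Convexity is time sharing: two schemes are run side by side on the disjoint
   unions of their auxiliary alphabets, the side being read off U. The side is
   a function of U independent of (X, Y, Z), so every rate and distortion of
   the combined scheme is the corresponding convex combination.

   The cardinality bounds are obtained by reducing U, then V, then W.
   Reweighting the channel that produces one auxiliary variable by a function
   s >= 0 of its output which preserves the law of its input leaves the law of
   everything upstream unchanged, and makes each rate and distortion that
   depends on the reweighting a linear function of s. A Caratheodory-type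
   support reduction, moving along a kernel direction until a coordinate of s
   vanishes, then yields such an s supported on at most #inputs + #scores - 1
   points without increasing any score; the support of s is the new
   alphabet. *)

Lemma sumr_inj_supp (T T' : finType) (f : T -> T') (F : T' -> R) :
  injective f -> (forall t', (forall t, f t != t') -> F t' = 0) ->
  \sum_(t' : T') F t' = \sum_(t : T) F (f t).
Proof.
move=> finj F0; rewrite (bigID [in [set f t | t in predT]]) /=.
rewrite [X in _ + X]big1 ?addr0 ?big_imset //; first by move=> ? ? _ _ /finj.
by move=> t' ft'; apply: F0 => t; apply: contraNneq ft' => <-; apply: imset_f.
Qed.

Lemma sumr_nonzero (T : finType) (F : T -> R) : \sum_t F t != 0 -> exists t, F t != 0.
Proof.
move=> sF; apply/existsP; apply: contraNT sF => /existsPn F0.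
by rewrite big1 // => t _; apply/eqP; rewrite -[_ == _]negbK F0.
Qed.

Lemma sumr_neq0_of (T : finType) (F : T -> R) t :
  (forall t, 0 <= F t) -> F t != 0 -> \sum_t F t != 0.
Proof.
move=> F_ge0 Ft; apply: contra Ft => /eqP.
by move=> /(psumr_eq0P (fun t _ => F_ge0 t)) /(_ t isT) ->.
Qed.

Lemma sumr_delta_mul (K : finType) (s : K -> R) k0 x :
  \sum_k s k * (if k0 == k then x else 0) = s k0 * x.
Proof.
rewrite (bigD1 k0) //= eqxx big1 ?addr0 // => k /negbTE k0k.
by rewrite eq_sym k0k mulr0.
Qed.

Lemma sumr_fibers (T K : finType) (g : T -> K) (s : K -> R) (F : T -> R) :
  \sum_t s (g t) * F t = \sum_k s k * \sum_t (if g t == k then F t else 0).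
Proof.
symmetry; under eq_bigr do rewrite big_distrr /=.
by rewrite exchange_big; apply: eq_bigr => t _; rewrite sumr_delta_mul.
Qed.

Lemma sumr3_fibers (TA TB TC K : finType) (g : TA -> TB -> TC -> K) (s : K -> R)
    (F : TA -> TB -> TC -> R) :
  \sum_a \sum_b \sum_c s (g a b c) * F a b c =
  \sum_k s k * \sum_a \sum_b \sum_c (if g a b c == k then F a b c else 0).
Proof.
symmetry; under eq_bigr do rewrite big_distrr /=.
rewrite exchange_big; apply: eq_bigr => a _.
under eq_bigr do rewrite big_distrr /=.
rewrite exchange_big; apply: eq_bigr => b _.
under eq_bigr do rewrite big_distrr /=.
by rewrite exchange_big; apply: eq_bigr => c _; rewrite sumr_delta_mul.
Qed.

Lemma ratio_scale (k a b : R) : k != 0 -> (k * a) / (k * b) = a / b.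
Proof. by move=> k0; rewrite -mulf_div divff ?mul1r. Qed.

Lemma ratio_scale2 (k a b c d : R) :
  k != 0 -> (k * a) * (k * b) / ((k * c) * (k * d)) = a * b / (c * d).
Proof. by move=> k0; rewrite mulrACA [X in _ / X]mulrACA ratio_scale ?mulf_neq0. Qed.

Lemma ratio_scale_num_den (k a b c d : R) :
  k != 0 -> (k * a) * b / (c * (k * d)) = a * b / (c * d).
Proof. by move=> k0; rewrite -[k * a * b]mulrA [c * _]mulrCA ratio_scale. Qed.

(** * Reweighting and embedding of distributions *)

Section Functionals.
Variable O : finType.
Implicit Types (P : O -> R) (E : pred O).

Definition same_law (TM : finType) P P' (M : O -> TM) :=
  forall m, prob P' (fun o => M o == m) = prob P (fun o => M o == m).

Definition cmi_term P (TA TB TC : finType) (A : O -> TA) (B : O -> TB) (C : O -> TC)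
    a b c : R :=
  let pabc := prob P (fun o => [&& A o == a, B o == b & C o == c]) in
  let pac := prob P (fun o => (A o == a) && (C o == c)) in
  let pbc := prob P (fun o => (B o == b) && (C o == c)) in
  let pc := prob P (fun o => C o == c) in
  if 0 < pabc then pabc * log2 (pabc * pc / (pac * pbc)) else 0.

Lemma cmiE P (TA TB TC : finType) (A : O -> TA) (B : O -> TB) (C : O -> TC) :
  cmi P A B C = \sum_a \sum_b \sum_c cmi_term P A B C a b c.
Proof. by []. Qed.

Definition cmi_at P (TA TB TC K : finType) (A : O -> TA) (B : O -> TB) (C : O -> TC)
    (g : TA -> TB -> TC -> K) (k : K) : R :=
  \sum_a \sum_b \sum_c (if g a b c == k then cmi_term P A B C a b c else 0).

Definition expect_at P (K : finType) (T : O -> K) (f : O -> R) (k : K) : R :=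
  \sum_o (if T o == k then P o * f o else 0).

Lemma prob_fibers (TM : finType) P (M : O -> TM) (E : pred TM) :
  prob P (fun o => E (M o)) = \sum_m (E m)%:R * prob P (fun o => M o == m).
Proof.
transitivity (\sum_o (E (M o))%:R * P o).
  by rewrite /prob big_mkcond; apply: eq_bigr => o _; case: (E (M o)); rewrite ?mul1r ?mul0r.
rewrite (sumr_fibers M (fun m => (E m)%:R)); apply: eq_bigr => m _.
by rewrite /prob [in RHS]big_mkcond.
Qed.

Lemma prob_same_law (TM : finType) P P' (M : O -> TM) (E : pred O) (E' : pred TM) :
  same_law P P' M -> (forall o, E o = E' (M o)) -> prob P' E = prob P E.
Proof.
move=> hM hE; rewrite /prob !(eq_bigl _ _ hE) -!/(prob _ (fun o => E' (M o))).
by rewrite !prob_fibers; apply: eq_bigr => m _; rewrite hM.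
Qed.

Lemma cmi_same_law (TM TA TB TC : finType) P P' (M : O -> TM)
    (A : O -> TA) (B : O -> TB) (C : O -> TC) fA fB fC :
  same_law P P' M ->
  (forall o, A o = fA (M o)) -> (forall o, B o = fB (M o)) -> (forall o, C o = fC (M o)) ->
  cmi P' A B C = cmi P A B C.
Proof.
move=> hM hA hB hC; apply: eq_bigr => a _; apply: eq_bigr => b _; apply: eq_bigr => c _.
rewrite (prob_same_law (E' := fun m => [&& fA m == a, fB m == b & fC m == c]) hM);
  last by move=> o; rewrite hA hB hC.
rewrite (prob_same_law (E' := fun m => (fA m == a) && (fC m == c)) hM);
  last by move=> o; rewrite hA hC.
rewrite (prob_same_law (E' := fun m => (fB m == b) && (fC m == c)) hM);
  last by move=> o; rewrite hB hC.
by rewrite (prob_same_law (E' := fun m => fC m == c) hM) // => o; rewrite hC.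
Qed.

Lemma expect_same_law (TM : finType) P P' (M : O -> TM) (g : TM -> R) (f : O -> R) :
  same_law P P' M -> (forall o, f o = g (M o)) -> expect P' f = expect P f.
Proof.
move=> hM hf.
have byM Q : expect Q f = \sum_m g m * prob Q (fun o => M o == m).
  rewrite /expect (eq_bigr (fun o => g (M o) * Q o)) => [|o _]; last by rewrite hf mulrC.
  by rewrite (sumr_fibers M); apply: eq_bigr => m _; rewrite /prob [in RHS]big_mkcond.
by rewrite !byM; under eq_bigr do rewrite hM.
Qed.

Section Rescaling.
Variables (K : finType) (T : O -> K) (s : K -> R) (P P' : O -> R).
Hypothesis (s_ge0 : forall k, 0 <= s k) (hP' : forall o, P' o = s (T o) * P o).

Lemma prob_rescale (E : pred O) k : (forall o, E o -> T o = k) -> prob P' E = s k * prob P E.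
Proof. by move=> hE; rewrite /prob big_distrr; apply: eq_bigr => o /hE <-. Qed.

Lemma expect_rescale (f : O -> R) : expect P' f = \sum_k s k * expect_at P T f k.
Proof. by rewrite /expect -sumr_fibers; apply: eq_bigr => o _; rewrite hP' mulrA. Qed.

Lemma cmi_rescaleC (TA TB TC : finType) (A : O -> TA) (B : O -> TB) (C : O -> TC)
    (g : TC -> K) :
  (forall o, T o = g (C o)) ->
  cmi P' A B C = \sum_k s k * cmi_at P A B C (fun _ _ c => g c) k.
Proof.
move=> hT; rewrite -sumr3_fibers.
apply: eq_bigr => a _; apply: eq_bigr => b _; apply: eq_bigr => c _.
have inC (E : pred O) : (forall o, E o -> C o == c) -> prob P' E = s (g c) * prob P E.
  by move=> hE; apply: prob_rescale => o /hE /eqP <-.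
rewrite /cmi_term !inC; try by [move=> o /and3P[] | move=> o /andP[] | move=> o].
have [->|s_gt0] := eqVneq (s (g c)) 0; first by rewrite !mul0r ltxx.
rewrite pmulr_rgt0 ?lt_def ?s_ge0 ?s_gt0 //; case: ifP => _; last by rewrite mulr0.
by rewrite ratio_scale2 // mulrA.
Qed.

Lemma cmi_rescaleB (TM TA TC : finType) (M : O -> TM) (A : O -> TA) (C : O -> TC) fA fC :
  same_law P P' M -> (forall o, A o = fA (M o)) -> (forall o, C o = fC (M o)) ->
  cmi P' A T C = \sum_k s k * cmi_at P A T C (fun _ b _ => b) k.
Proof.
move=> hM hA hC; rewrite -sumr3_fibers.
apply: eq_bigr => a _; apply: eq_bigr => b _; apply: eq_bigr => c _.
rewrite /cmi_term (prob_same_law (E := fun o => (A o == a) && (C o == c))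
  (E' := fun m => (fA m == a) && (fC m == c)) hM); last by move=> o; rewrite hA hC.
rewrite (prob_same_law (E := fun o => C o == c) (E' := fun m => fC m == c) hM);
  last by move=> o; rewrite hC.
rewrite !(prob_rescale (k := b)); try by [move=> o /and3P[_ /eqP] | move=> o /andP[/eqP]].
have [->|s_gt0] := eqVneq (s b) 0; first by rewrite !mul0r ltxx.
rewrite pmulr_rgt0 ?lt_def ?s_ge0 ?s_gt0 //; case: ifP => _; last by rewrite mulr0.
by rewrite ratio_scale_num_den // mulrA.
Qed.

End Rescaling.
End Functionals.

Section Embedding.
Variables (O O' : finType) (phi : O -> O') (P : O -> R) (P' : O' -> R).
Hypotheses (phi_inj : injective phi) (P'_phi : forall o, P' (phi o) = P o)
  (P'_supp : forall o', (forall o, phi o != o') -> P' o' = 0).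

Lemma prob_embed (E : pred O') : prob P' E = prob P (fun o => E (phi o)).
Proof.
rewrite /prob big_mkcond (sumr_inj_supp phi_inj) => [|o' /P'_supp->]; last by case: ifP.
by rewrite [in RHS]big_mkcond; apply: eq_bigr => o _; rewrite P'_phi.
Qed.

Lemma expect_embed (f : O' -> R) : expect P' f = expect P (fun o => f (phi o)).
Proof.
rewrite /expect (sumr_inj_supp phi_inj) => [|o' /P'_supp->]; last by rewrite mul0r.
by apply: eq_bigr => o _; rewrite P'_phi.
Qed.

Lemma cmi_embed (TA TB TC TA' TB' TC' : finType)
    (A : O -> TA) (B : O -> TB) (C : O -> TC) (A' : O' -> TA') (B' : O' -> TB') (C' : O' -> TC')
    (fA : TA -> TA') (fB : TB -> TB') (fC : TC -> TC') :
  injective fA -> injective fB -> injective fC ->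
  (forall o, A' (phi o) = fA (A o)) -> (forall o, B' (phi o) = fB (B o)) ->
  (forall o, C' (phi o) = fC (C o)) ->
  cmi P' A' B' C' = cmi P A B C.
Proof.
move=> iA iB iC hA hB hC.
have off_image a' b' c' :
    (forall o, [&& fA (A o) == a', fB (B o) == b' & fC (C o) == c'] = false) ->
  cmi_term P' A' B' C' a' b' c' = 0.
  move=> h; rewrite /cmi_term prob_embed /prob big_pred0 ?ltxx // => o.
  by rewrite hA hB hC h.
rewrite !cmiE (sumr_inj_supp iA) => [|a' ha]; last first.
  apply: big1 => b' _; apply: big1 => c' _; apply: off_image => o.
  by rewrite (negbTE (ha _)).
apply: eq_bigr => a _; rewrite (sumr_inj_supp iB) => [|b' hb]; last first.
  apply: big1 => c' _; apply: off_image => o.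
  by rewrite (negbTE (hb _)) andbF.
apply: eq_bigr => b _; rewrite (sumr_inj_supp iC) => [|c' hc]; last first.
  by apply: off_image => o; rewrite (negbTE (hc _)) !andbF.
apply: eq_bigr => c _; rewrite /cmi_term !prob_embed.
by congr (if 0 < _ then _ * log2 (_ * _ / (_ * _)) else 0); apply: eq_bigl => o;
  rewrite ?hA ?hB ?hC ?(inj_eq iA) ?(inj_eq iB) ?(inj_eq iC).
Qed.

End Embedding.

(** * Support reduction *)

Definition supp (K : finType) (s : K -> R) := [set k | s k != 0].

Lemma card_nonzero_sig (K : finType) (s : K -> R) :
  #|({k | s k != 0} : finType)| = #|supp s|.
Proof. by rewrite card_sig; apply: eq_card => k; rewrite !inE. Qed.

Lemma nonzero_sig_off (K : finType) (s : K -> R) k :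
  (forall k' : {k | s k != 0}, val k' != k) -> s k = 0.
Proof. by move=> off; apply/eqP; apply: contraT => sk; have /eqP := off (exist _ k sk). Qed.

Lemma exists_annihilator (K CT : finType) (G : CT -> K -> R) :
  (#|CT| < #|K|)%N ->
  exists2 d : K -> R, exists k, d k != 0 & forall ct, \sum_k d k * G ct k = 0.
Proof.
move=> ltCK.
pose M : 'M[R]_(#|K|, #|CT|) := \matrix_(i, j) G (enum_val j) (enum_val i).
have kerM : kermx M != 0.
  rewrite -mxrank_eq0 mxrank_ker -lt0n subn_gt0.
  exact: leq_ltn_trans (rank_leq_col M) ltCK.
have [i Mi0] : exists i, row i (kermx M) != 0.
  apply/existsP; apply: contraNT kerM => /existsPn Mi0; apply/eqP/row_matrixP => i.
  by rewrite row0; apply/eqP; rewrite -[_ == _]negbK Mi0.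
pose v := row i (kermx M).
have vM : v *m M = 0 by apply/eqP; rewrite -sub_kermx row_sub.
exists (fun k => v 0 (enum_rank k)).
  have [j vj] : exists j, v 0 j != 0.
    apply/existsP; apply: contraNT Mi0 => /existsPn v0; apply/eqP/rowP => j.
    by rewrite [RHS]mxE; apply/eqP; move: (v0 j); rewrite negbK.
  by exists (enum_val j); rewrite enum_valK.
move=> ct; transitivity ((v *m M) 0 (enum_rank ct)); last by rewrite vM mxE.
rewrite mxE (sumr_inj_supp (@enum_val_inj _ K)) => [|k' /(_ (enum_rank k'))];
  last by rewrite enum_rankK eqxx.
by apply: eq_bigr => k _; rewrite enum_valK !mxE enum_rankK.
Qed.

Section SupportReduction.
Variables (K J : finType) (n : nat) (e : J -> K -> R) (c : 'I_n.+1 -> K -> R).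

(* The sign of the descent direction is chosen so that [c ord0] cannot increase:
   that functional does not count in the bound [#|J| + n]. *)

Lemma exists_descent_direction (s : K -> R) : (#|J| + n < #|supp s|)%N ->
  exists2 d : K -> R, exists k, d k != 0 &
    [/\ forall j, \sum_k d k * e j k = 0, forall i : 'I_n, \sum_k d k * c (lift ord0 i) k = 0,
        forall k, s k = 0 -> d k = 0 & \sum_k d k * c ord0 k <= 0].
Proof.
move=> big_supp.
pose CT : finType := ((J + 'I_n) + {k : K | s k == 0})%type.
pose G (ct : CT) k : R := match ct with
  | inl (inl j) => e j k
  | inl (inr i) => c (lift ord0 i) k
  | inr k0 => if val k0 == k then 1 else 0
  end.
have ltCK : (#|CT| < #|K|)%N.
  rewrite !card_sum card_ord card_sig -(cardC (supp s)).
  have -> : #|[pred k | s k == 0]| = #|[predC supp s]|.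
    by apply: eq_card => k; rewrite !inE negbK.
  by rewrite ltn_add2r.
have [d [k dk] dG] := exists_annihilator G ltCK.
pose sgn : R := if \sum_k d k * c ord0 k <= 0 then 1 else -1.
have sgn_sum F : \sum_k sgn * d k * F k = sgn * \sum_k d k * F k.
  by rewrite big_distrr; apply: eq_bigr => k' _; rewrite /= mulrA.
exists (fun k => sgn * d k).
  by exists k; rewrite mulf_neq0 // /sgn; case: ifP; rewrite ?oppr_eq0 oner_eq0.
split=> [j | i | k' sk' | ]; rewrite ?sgn_sum.
- by rewrite (dG (inl (inl j))) mulr0.
- by rewrite (dG (inl (inr i))) mulr0.
- have := dG (inr (exist _ k' (introT eqP sk'))).
  by rewrite /= sumr_delta_mul mulr1 => ->; rewrite mulr0.
- rewrite /sgn; case: ifP => [|/negbT]; rewrite ?mul1r // -ltNge => /ltW.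
  by rewrite mulN1r oppr_le0.
Qed.

Lemma exists_neg_entry (s d : K -> R) :
  (forall k, s k != 0 -> 0 < \sum_j e j k) -> (forall j, \sum_k d k * e j k = 0) ->
  (forall k, s k = 0 -> d k = 0) -> (exists k, d k != 0) -> exists k, d k < 0.
Proof.
move=> e_pos de ds [k1 dk1]; apply/existsP; apply: contraT => /existsPn d_ge0.
have sk1 : s k1 != 0 by apply: contra dk1 => /eqP /ds ->.
have dE_ge0 k : 0 <= d k * \sum_j e j k.
  have [/ds ->|/e_pos/ltW] := eqVneq (s k) 0; first by rewrite mul0r.
  by apply: mulr_ge0; rewrite leNgt d_ge0.
have : \sum_k d k * \sum_j e j k = 0.
  under eq_bigr do rewrite big_distrr /=.
  by rewrite exchange_big big1.
move=> /(psumr_eq0P (fun k _ => dE_ge0 k)) /(_ k1 isT) /eqP.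
by rewrite mulf_eq0 (negbTE dk1) (gt_eqF (e_pos _ sk1)).
Qed.

Lemma support_step (s : K -> R) :
  (forall k, 0 <= s k) -> (forall k, s k != 0 -> 0 < \sum_j e j k) ->
  (#|J| + n < #|supp s|)%N ->
  exists s' : K -> R, [/\ forall k, 0 <= s' k, supp s' \proper supp s,
    forall j, \sum_k s' k * e j k = \sum_k s k * e j k &
    forall i, \sum_k s' k * c i k <= \sum_k s k * c i k].
Proof.
move=> s_ge0 e_pos /exists_descent_direction[d d_neq0 [de dc ds dc0]].
have [kn dkn] := exists_neg_entry e_pos de ds d_neq0.
(* move along d until the first coordinate of s hits zero *)
pose ratio k := s k / - d k.
have [km dkm km_min] := arg_minP (P := fun k => d k < 0) ratio dkn.
pose t := ratio km.
have t_ge0 : 0 <= t by rewrite divr_ge0 // oppr_ge0 ltW.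
have sumE F : \sum_k (s k + t * d k) * F k = \sum_k s k * F k + t * \sum_k d k * F k.
  by rewrite big_distrr -big_split; apply: eq_bigr => k _ /=; ring.
exists (fun k => s k + t * d k); split.
- move=> k; have [dk|dk] := ltP (d k) 0; last exact: addr_ge0 (s_ge0 k) (mulr_ge0 t_ge0 dk).
  have := km_min k dk; rewrite -/t ler_pdivlMr ?oppr_gt0 // mulrN; lra.
- apply/properP; split.
    by apply/subsetP => k; rewrite !inE; apply: contra => /eqP sk; rewrite sk ds // mulr0 addr0.
  exists km; rewrite !inE; first by apply: contraTneq dkm => /ds ->; rewrite ltxx.
  by rewrite negbK /t /ratio invrN mulrN mulNr divfK ?subrr // ltr0_neq0.
- by move=> j; rewrite sumE de mulr0 addr0.
- move=> i; rewrite sumE; case: (unliftP ord0 i) => [i' ->|->].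
    by rewrite dc mulr0 addr0.
  by rewrite gerDl mulr_ge0_le0.
Qed.

Lemma support_reduction (s0 : K -> R) :
  (forall k, 0 <= s0 k) -> (forall k, s0 k != 0 -> 0 < \sum_j e j k) ->
  exists s : K -> R, [/\ forall k, 0 <= s k, supp s \subset supp s0,
    (#|supp s| <= #|J| + n)%N, forall j, \sum_k s k * e j k = \sum_k s0 k * e j k &
    forall i, \sum_k s k * c i k <= \sum_k s0 k * c i k].
Proof.
have [m] := ubnP #|supp s0|; elim: m s0 => // m IH s0 /ltnSE card_s0 s0_ge0 e_pos.
have [small|big] := leqP #|supp s0| (#|J| + n).
  by exists s0; split.
have [s1 [s1_ge0 s10 e1 c1]] := support_step s0_ge0 e_pos big.
have /andP[sub10 _] := s10.
have e_pos1 k : s1 k != 0 -> 0 < \sum_j e j k.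
  by move=> s1k; apply: e_pos; have := subsetP sub10 k; rewrite !inE; apply.
have [s [s_ge0 sub card_s e_s c_s]] :=
  IH s1 (leq_trans (proper_card s10) card_s0) s1_ge0 e_pos1.
exists s; split=> // [|j|i]; first exact: subset_trans sub sub10.
  by rewrite e_s e1.
exact: le_trans (c_s i) (c1 i).
Qed.

End SupportReduction.

(** * Reweighted channels *)

Lemma channel_ge0 (A B : finType) (k : A -> B -> R) a b : channel k -> 0 <= k a b.
Proof. by case/(_ a). Qed.

Lemma channel_sum1 (A B : finType) (k : A -> B -> R) a : channel k -> \sum_b k a b = 1.
Proof. by case/(_ a). Qed.

Section ChannelRescaling.
Variables (A B : finType) (k : A -> B -> R) (q : A -> R).
Hypotheses (k_ch : channel k) (q_ge0 : forall a, 0 <= q a).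

Definition rescaled_channel (s : B -> R) (b0 : B) a b : R :=
  if 0 < q a then s b * k a b else (b == b0)%:R.

Definition keeps_input_weight (s : B -> R) :=
  forall a, \sum_b s b * (q a * k a b) = q a.

Definition output_support (b : B) : R := if 0 < \sum_a q a * k a b then 1 else 0.

Lemma output_support_ge0 b : 0 <= output_support b.
Proof. by rewrite /output_support; case: ifP. Qed.

Lemma channel_rescaled s b0 :
  (forall b, 0 <= s b) -> keeps_input_weight s -> channel (rescaled_channel s b0).
Proof.
move=> s_ge0 s_keep a; rewrite /rescaled_channel.
have [q_gt0|/negbTE q_le0] := boolP (0 < q a); rewrite ?q_gt0 ?q_le0; split=> [b|].
- by rewrite mulr_ge0 // channel_ge0.
- apply: (mulfI (lt0r_neq0 q_gt0)); rewrite mulr1 -{2}(s_keep a) big_distrr.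
  by apply: eq_bigr => b _ /=; rewrite mulrCA.
- exact: ler0n.
- by rewrite (bigD1 b0) //= eqxx big1 ?addr0 // => b /negbTE ->.
Qed.

Lemma rescaled_channel_eq0 s b0 a b : s b0 != 0 -> s b = 0 -> rescaled_channel s b0 a b = 0.
Proof.
move=> sb0 sb; rewrite /rescaled_channel sb mul0r; case: ifP => // _.
by case: eqP => // bb0; rewrite -bb0 sb eqxx in sb0.
Qed.

Lemma mul_rescaled_channel s b0 (w : R) a b :
  (q a = 0 -> w = 0) -> w * rescaled_channel s b0 a b = s b * (w * k a b).
Proof.
move=> qw; rewrite /rescaled_channel; case: ifP => [_|/negbT]; first by rewrite mulrCA.
by rewrite -leNgt => q_le0; rewrite qw ?mul0r ?mulr0 //; apply/eqP; rewrite eq_le q_le0 q_ge0.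
Qed.

Lemma mul_output_support (w : R) a b :
  (q a = 0 -> w = 0) -> w * k a b = output_support b * (w * k a b).
Proof.
move=> qw; rewrite /output_support; case: ltP => [_|col_le0]; first by rewrite mul1r.
have qk_ge0 a' : 0 <= q a' * k a' b by rewrite mulr_ge0 // channel_ge0.
have : \sum_a q a * k a b = 0 by apply/eqP; rewrite eq_le col_le0 sumr_ge0.
move=> /(psumr_eq0P (fun a _ => qk_ge0 a)) /(_ a isT) /eqP.
by rewrite mul0r mulf_eq0 => /orP[/eqP/qw ->|/eqP ->]; rewrite ?mul0r ?mulr0.
Qed.

Lemma channel_support_reduction (n : nat) (c : 'I_n.+1 -> B -> R) :
  (exists a, q a != 0) ->
  exists s : B -> R, exists2 b0, s b0 != 0 &
    [/\ forall b, 0 <= s b, (#|supp s| <= #|A| + n)%N, keeps_input_weight s &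
        forall i, \sum_b s b * c i b <= \sum_b output_support b * c i b].
Proof.
move=> [a1 qa1].
have supp_pos b : output_support b != 0 -> 0 < \sum_a q a * k a b.
  by rewrite /output_support; case: ifP; rewrite ?eqxx.
have [s [s_ge0 _ card_s s_keep s_c]] :=
  @support_reduction _ _ _ (fun a b => q a * k a b) c _ output_support_ge0 supp_pos.
have keep : keeps_input_weight s.
  move=> a; rewrite s_keep.
  transitivity (q a * \sum_b k a b); last by rewrite channel_sum1 ?mulr1.
  by rewrite big_distrr; apply: eq_bigr => b _; rewrite -mul_output_support.
have [b0 sb0] : exists b, s b != 0.
  have /sumr_nonzero[b] : \sum_b s b * (q a1 * k a1 b) != 0 by rewrite keep.
  by move=> sb; exists b; apply: contraNneq sb => ->; rewrite mul0r.
by exists s, b0.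
Qed.

End ChannelRescaling.

(** * Test channels and their scores *)

Lemma sum_fst_cond (K L : finType) (E : pred K) (F : K * L -> R) :
  \sum_(o | E o.1) F o = \sum_(k | E k) \sum_l F (k, l).
Proof. by rewrite pair_big; apply: eq_big => -[k l] //=; rewrite andbT. Qed.

Arguments oX {X Y Z U V W}.
Arguments oY {X Y Z U V W}.
Arguments oZ {X Y Z U V W}.
Arguments oU {X Y Z U V W}.
Arguments oV {X Y Z U V W}.
Arguments oW {X Y Z U V W}.

Section Schemes.
Variables (X Y Z Xh Zh : finType) (pxy : X -> Y -> R) (pzx : X -> Z -> R).
Variables (dx : X -> Xh -> R) (dz : Z -> Zh -> R) (Dx Dz : R).

Definition is_scheme (U V W : finType) (pu : Y -> U -> R) (pv : U -> Z -> V -> R)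
    (pw : U -> V -> X -> W -> R) :=
  [/\ channel pu, forall u, channel (pv u) & forall u v, channel (pw u v)].

Section Laws.
Variables (U V W : finType) (pu : Y -> U -> R) (pv : U -> Z -> V -> R)
  (pw : U -> V -> X -> W -> R).
Hypothesis sch : is_scheme pu pv pw.
Let P := joint pxy pzx pu pv pw.

Lemma law_xyzuv x y z u v :
  prob P (fun o => o.1 == (x, y, z, u, v)) = pxy x y * pzx x z * pu y u * pv u z v.
Proof.
case: sch => _ _ pw_ch.
rewrite /prob (sum_fst_cond (fun k => k == _)) big_pred1_eq.
by rewrite -[RHS]mulr1 -(channel_sum1 x (pw_ch u v)) big_distrr.
Qed.

Lemma law_xyzu x y z u :
  prob P (fun o => o.1.1 == (x, y, z, u)) = pxy x y * pzx x z * pu y u.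
Proof.
case: sch => _ pv_ch _.
transitivity (\sum_v prob P (fun o => o.1 == (x, y, z, u, v))).
  rewrite /prob (sum_fst_cond (fun k => k.1 == _)) (sum_fst_cond (fun k => k == _)).
  rewrite big_pred1_eq; apply: eq_bigr => v _.
  by rewrite (sum_fst_cond (fun k => k == _)) big_pred1_eq.
under eq_bigr do rewrite law_xyzuv.
by rewrite -big_distrr (channel_sum1 _ (pv_ch u)); apply: mulr1.
Qed.

Lemma law_xyz x y z : prob P (fun o => o.1.1.1 == (x, y, z)) = pxy x y * pzx x z.
Proof.
case: sch => pu_ch _ _.
transitivity (\sum_u prob P (fun o => o.1.1 == (x, y, z, u))).
  rewrite /prob (sum_fst_cond (fun k => k.1.1 == _)) (sum_fst_cond (fun k => k.1 == _)).
  rewrite (sum_fst_cond (fun k => k == _)) big_pred1_eq; apply: eq_bigr => u _.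
  by rewrite (sum_fst_cond (fun k => k.1 == _)) (sum_fst_cond (fun k => k == _)) big_pred1_eq.
under eq_bigr do rewrite law_xyzu.
by rewrite -big_distrr (channel_sum1 _ pu_ch); apply: mulr1.
Qed.

End Laws.

Section SameLaw.
Variables (U V W : finType) (pu pu' : Y -> U -> R) (pv pv' : U -> Z -> V -> R)
  (pw pw' : U -> V -> X -> W -> R).

Lemma same_law_xyz : is_scheme pu pv pw -> is_scheme pu' pv' pw' ->
  same_law (joint pxy pzx pu pv pw) (joint pxy pzx pu' pv' pw') (fun o => o.1.1.1).
Proof. by move=> sch sch' [[x y] z]; rewrite !law_xyz. Qed.

Lemma same_law_xyzu : is_scheme pu pv pw -> is_scheme pu pv' pw' ->
  same_law (joint pxy pzx pu pv pw) (joint pxy pzx pu pv' pw') (fun o => o.1.1).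
Proof. by move=> sch sch' [[[x y] z] u]; rewrite !law_xyzu. Qed.

Lemma same_law_xyzuv : is_scheme pu pv pw -> is_scheme pu pv pw' ->
  same_law (joint pxy pzx pu pv pw) (joint pxy pzx pu pv pw') (fun o => o.1).
Proof. by move=> sch sch' [[[[x y] z] u] v]; rewrite !law_xyzuv. Qed.

End SameLaw.

Section Scores.
Variables (U V W : finType) (xhat : U -> W -> Z -> Xh) (zhat : U -> V -> X -> Zh).
Implicit Types (P : X * Y * Z * U * V * W -> R) (i : nat).

(* The three rates and two expected distortions, ordered so that reweighting
   the channel of W, of V or of U moves exactly the first 2, 4 or 5 of them. *)
Definition score P i : R :=
  match i with
  | 0 => cmi P oX oW (fun o => (oU o, oV o, oZ o))
  | 1 => expect P (fun o => dx (oX o) (xhat (oU o) (oW o) (oZ o)))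
  | 2 => cmi P oZ oV (fun o => (oU o, oX o))
  | 3 => expect P (fun o => dz (oZ o) (zhat (oU o) (oV o) (oX o)))
  | _ => cmi P oY oU oZ
  end.

Definition score_at_U P i (u : U) : R :=
  match i with
  | 0 => cmi_at P oX oW (fun o => (oU o, oV o, oZ o)) (fun _ _ c => c.1.1) u
  | 1 => expect_at P oU (fun o => dx (oX o) (xhat (oU o) (oW o) (oZ o))) u
  | 2 => cmi_at P oZ oV (fun o => (oU o, oX o)) (fun _ _ c => c.1) u
  | 3 => expect_at P oU (fun o => dz (oZ o) (zhat (oU o) (oV o) (oX o))) u
  | _ => cmi_at P oY oU oZ (fun _ b _ => b) u
  end.

Definition score_at_V P i (v : V) : R :=
  match i with
  | 0 => cmi_at P oX oW (fun o => (oU o, oV o, oZ o)) (fun _ _ c => c.1.2) v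
  | 1 => expect_at P oV (fun o => dx (oX o) (xhat (oU o) (oW o) (oZ o))) v
  | 2 => cmi_at P oZ oV (fun o => (oU o, oX o)) (fun _ b _ => b) v
  | _ => expect_at P oV (fun o => dz (oZ o) (zhat (oU o) (oV o) (oX o))) v
  end.

Definition score_at_W P i (w : W) : R :=
  match i with
  | 0 => cmi_at P oX oW (fun o => (oU o, oV o, oZ o)) (fun _ b _ => b) w
  | _ => expect_at P oW (fun o => dx (oX o) (xhat (oU o) (oW o) (oZ o))) w
  end.

Section Rescaled.
Variables (P P' : X * Y * Z * U * V * W -> R).

Lemma score_rescaleU (s : U -> R) : (forall u, 0 <= s u) ->
  (forall o, P' o = s (oU o) * P o) -> same_law P P' (fun o => o.1.1.1) ->
  forall i, score P' i = \sum_u s u * score_at_U P i u.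
Proof.
move=> s_ge0 P'E law [|[|[|[|i]]]] /=.
- by apply: (cmi_rescaleC s_ge0 P'E) => -[[[[[x y] z] u] v] w].
- exact: expect_rescale P'E _.
- by apply: (cmi_rescaleC s_ge0 P'E) => -[[[[[x y] z] u] v] w].
- exact: expect_rescale P'E _.
- by apply: (cmi_rescaleB (fA := fun m => m.1.2) (fC := fun m => m.2) s_ge0 P'E law);
    case=> [[[[[x y] z] u] v] w].
Qed.

Lemma score_rescaleV (s : V -> R) : (forall v, 0 <= s v) ->
  (forall o, P' o = s (oV o) * P o) -> same_law P P' (fun o => o.1.1) ->
  (forall i : 'I_4, score P' i = \sum_v s v * score_at_V P i v) /\ score P' 4 = score P 4.
Proof.
move=> s_ge0 P'E law; split=> [[[|[|[|[|i]]]] //= _]|].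
- by apply: (cmi_rescaleC s_ge0 P'E) => -[[[[[x y] z] u] v] w].
- exact: expect_rescale P'E _.
- by apply: (cmi_rescaleB (fA := fun m => m.1.2) (fC := fun m => (m.2, m.1.1.1)) s_ge0 P'E law);
    case=> [[[[[x y] z] u] v] w].
- exact: expect_rescale P'E _.
- by apply: (cmi_same_law (fA := fun m => m.1.1.2) (fB := fun m => m.2) (fC := fun m => m.1.2) law);
    case=> [[[[[x y] z] u] v] w].
Qed.

Lemma score_rescaleW (s : W -> R) : (forall w, 0 <= s w) ->
  (forall o, P' o = s (oW o) * P o) -> same_law P P' (fun o => o.1) ->
  (forall i : 'I_2, score P' i = \sum_w s w * score_at_W P i w) /\
  (forall i, (2 <= i)%N -> score P' i = score P i).
Proof.
move=> s_ge0 P'E law; split=> [[[|[|i]] //= _]|].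
- by apply: (cmi_rescaleB (fA := fun m => m.1.1.1.1)
    (fC := fun m => (m.1.2, m.2, m.1.1.2)) s_ge0 P'E law); case=> [[[[[x y] z] u] v] w].
- exact: expect_rescale P'E _.
case=> [|[|[|[|i]]]] //= _.
- by apply: (cmi_same_law (fA := fun m => m.1.1.2) (fB := fun m => m.2)
    (fC := fun m => (m.1.2, m.1.1.1.1)) law); case=> [[[[[x y] z] u] v] w].
- by apply: (expect_same_law (g := fun m => dz m.1.1.2 (zhat m.1.2 m.2 m.1.1.1.1)) law);
    case=> [[[[[x y] z] u] v] w].
- by apply: (cmi_same_law (fA := fun m => m.1.1.1.2) (fB := fun m => m.1.2)
    (fC := fun m => m.1.1.2) law); case=> [[[[[x y] z] u] v] w].
Qed.

End Rescaled.

Lemma score_eq P P' : (forall o, P' o = P o) -> forall i, score P' i = score P i.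
Proof.
move=> P'E i; have one_ge0 (u : U) : 0 <= 1 :> R by [].
have law : same_law P P' (fun o => o.1.1.1) by move=> m; apply: eq_bigr => o _; exact: P'E.
rewrite (score_rescaleU one_ge0 (P := P) (P' := P') _ law) => [|o]; last by rewrite P'E mul1r.
by rewrite (score_rescaleU one_ge0 (P := P) (P' := P) _ (fun m => erefl)) // => o; rewrite mul1r.
Qed.

End Scores.

Definition score_bound (r : R * R * R) (i : nat) : R :=
  match i with 0 => r.2 | 1 => Dx | 2 => r.1.2 | 3 => Dz | _ => r.1.1 end.

Lemma achievableP (U V W : finType) r :
  achievable pxy pzx dx dz Dx Dz U V W r <->
  exists pu pv pw xhat zhat, @is_scheme U V W pu pv pw /\
    forall i : 'I_5, score xhat zhat (joint pxy pzx pu pv pw) i <= score_bound r i.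
Proof.
split=> [[pu [pv [pw [xhat [zhat [pu_ch pv_ch pw_ch [g0 g1 g2 g3 g4]]]]]]]|].
  by exists pu, pv, pw, xhat, zhat; split=> // -[[|[|[|[|[|i]]]]] //].
move=> [pu [pv [pw [xhat [zhat [[pu_ch pv_ch pw_ch] g]]]]]].
have g' i (lt_i5 : (i < 5)%N) := g (Ordinal lt_i5).
exists pu, pv, pw, xhat, zhat; split=> //.
by split; [exact: (g' 4 isT) | exact: (g' 2 isT) | exact: (g' 0 isT) | exact: (g' 1 isT) |
  exact: (g' 3 isT)].
Qed.

Section Pullback.
Variables (U V W U' V' W' : finType) (fu : U' -> U) (fv : V' -> V) (fw : W' -> W).
Hypotheses (fu_inj : injective fu) (fv_inj : injective fv) (fw_inj : injective fw).
Variables (pu : Y -> U -> R) (pv : U -> Z -> V -> R) (pw : U -> V -> X -> W -> R).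
Variables (xhat : U -> W -> Z -> Xh) (zhat : U -> V -> X -> Zh).

Definition pull_outcome (o : X * Y * Z * U' * V' * W') : X * Y * Z * U * V * W :=
  let: (x, y, z, u, v, w) := o in (x, y, z, fu u, fv v, fw w).

Let pu' y u := pu y (fu u).
Let pv' u z v := pv (fu u) z (fv v).
Let pw' u v x w := pw (fu u) (fv v) x (fw w).

Lemma pull_outcome_inj : injective pull_outcome.
Proof.
move=> [[[[[x y] z] u] v] w] [[[[[x' y'] z'] u'] v'] w'] /= [-> -> ->].
by move=> /fu_inj -> /fv_inj -> /fw_inj ->.
Qed.

Lemma score_pullback :
  (forall o, (forall o', pull_outcome o' != o) -> joint pxy pzx pu pv pw o = 0) ->
  forall i, score (fun u w z => xhat (fu u) (fw w) z) (fun u v x => zhat (fu u) (fv v) x)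
                  (joint pxy pzx pu' pv' pw') i =
            score xhat zhat (joint pxy pzx pu pv pw) i.
Proof.
move=> P_supp.
have P_pull : forall o, joint pxy pzx pu pv pw (pull_outcome o) = joint pxy pzx pu' pv' pw' o.
  by case=> [[[[[x y] z] u] v] w].
have pair_inj (A A' B : finType) (f : A' -> A) : injective f ->
    injective (fun p : A' * B => (f p.1, p.2)) by move=> f_inj [a b] [a' b'] [/f_inj -> ->].
case=> [|[|[|[|i]]]] /=; symmetry.
- apply: (cmi_embed pull_outcome_inj P_pull P_supp (fA := id) (fB := fw)
    (fC := fun c => (fu c.1.1, fv c.1.2, c.2))) => //;
    try by case=> [[[[[x y] z] u] v] w].
  by move=> [[u v] z] [[u' v'] z'] [/fu_inj -> /fv_inj -> ->].
- rewrite (expect_embed pull_outcome_inj P_pull P_supp).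
  by apply: eq_bigr => -[[[[[x y] z] u] v] w].
- apply: (cmi_embed pull_outcome_inj P_pull P_supp (fA := id) (fB := fv)
    (fC := fun c => (fu c.1, c.2))) => //; try by case=> [[[[[x y] z] u] v] w].
  exact: pair_inj.
- rewrite (expect_embed pull_outcome_inj P_pull P_supp).
  by apply: eq_bigr => -[[[[[x y] z] u] v] w].
- apply: (cmi_embed pull_outcome_inj P_pull P_supp (fA := id) (fB := fu) (fC := id)) => //;
    by case=> [[[[[x y] z] u] v] w].
Qed.

Lemma achievable_restrict r :
  is_scheme pu pv pw ->
  (forall y u, (forall u', fu u' != u) -> pu y u = 0) ->
  (forall u z v, (forall v', fv v' != v) -> pv u z v = 0) ->
  (forall u v x w, (forall w', fw w' != w) -> pw u v x w = 0) ->
  (forall i : 'I_5, score xhat zhat (joint pxy pzx pu pv pw) i <= score_bound r i) ->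
  achievable pxy pzx dx dz Dx Dz U' V' W' r.
Proof.
move=> [pu_ch pv_ch pw_ch] pu0 pv0 pw0 ok; apply/achievableP.
exists pu', pv', pw', (fun u w z => xhat (fu u) (fw w) z), (fun u v x => zhat (fu u) (fv v) x).
split=> [|i]; last first.
  rewrite score_pullback //; case=> [[[[[x y] z] u] v] w] off /=.
  have [u' /eqP uE|u_off] := pickP (fun u' => fu u' == u); last first.
    by rewrite pu0 ?mulr0 ?mul0r // => u'; move: (u_off u') => /= ->.
  have [v' /eqP vE|v_off] := pickP (fun v' => fv v' == v); last first.
    by rewrite pv0 ?mulr0 ?mul0r // => v'; move: (v_off v') => /= ->.
  have [w' /eqP wE|w_off] := pickP (fun w' => fw w' == w); last first.
    by rewrite pw0 ?mulr0 // => w'; move: (w_off w') => /= ->.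
  by subst u v w; move: (off (x, y, z, u', v', w')); rewrite eqxx.
split=> [y|u z|u v x]; split=> [b|].
- exact: channel_ge0 pu_ch.
- by rewrite /pu' -(sumr_inj_supp fu_inj (pu0 y)) (channel_sum1 _ pu_ch).
- exact: channel_ge0 (pv_ch _).
- by rewrite /pv' -(sumr_inj_supp fv_inj (pv0 (fu u) z)) (channel_sum1 _ (pv_ch _)).
- exact: channel_ge0 (pw_ch _ _).
- by rewrite /pw' -(sumr_inj_supp fw_inj (pw0 (fu u) (fv v) x)) (channel_sum1 _ (pw_ch _ _)).
Qed.

End Pullback.
End Schemes.

(** * Cardinality bounds *)

Section Reductions.
Variables (X Y Z Xh Zh : finType) (pxy : X -> Y -> R) (pzx : X -> Z -> R).
Variables (dx : X -> Xh -> R) (dz : Z -> Zh -> R) (Dx Dz : R).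
Hypotheses (pxy_pmf : pmf (fun xy : X * Y => pxy xy.1 xy.2)) (pzx_ch : channel pzx).

Let pxy_ge0 x y : 0 <= pxy x y := pxy_pmf.1 (x, y).

Lemma exists_positive_prefix (U V W : finType) (pu : Y -> U -> R) (pv : U -> Z -> V -> R)
    (pw : U -> V -> X -> W -> R) :
  is_scheme pu pv pw ->
  exists x y z u v, [/\ pxy x y != 0, pzx x z != 0, pu y u != 0 & pv u z v != 0].
Proof.
move=> [pu_ch pv_ch _].
have [[x y] /= pxy1] : exists xy : X * Y, pxy xy.1 xy.2 != 0.
  by apply: sumr_nonzero; rewrite (proj2 pxy_pmf) oner_eq0.
have nz (A B : finType) (k : A -> B -> R) a : channel k -> exists b, k a b != 0.
  by move=> k_ch; apply: sumr_nonzero; rewrite channel_sum1 ?oner_eq0.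
have [z pzx1] := nz _ _ _ x pzx_ch; have [u pu1] := nz _ _ _ y pu_ch.
have [v pv1] := nz _ _ _ z (pv_ch u).
by exists x, y, z, u, v.
Qed.

Lemma reduce_U (U V W : finType) r :
  achievable pxy pzx dx dz Dx Dz U V W r ->
  exists U' : finType, (#|U'| <= #|Y| + 4)%N /\ achievable pxy pzx dx dz Dx Dz U' V W r.
Proof.
move=> /achievableP[pu [pv [pw [xhat [zhat [sch ok]]]]]]; have [pu_ch pv_ch pw_ch] := sch.
pose P := joint pxy pzx pu pv pw.
pose py y := \sum_x pxy x y.
have py_ge0 y : 0 <= py y by apply: sumr_ge0 => x _.
have py0 x y : py y = 0 -> pxy x y = 0.
  by move=> /(psumr_eq0P (fun x _ => pxy_ge0 x y)) /(_ x isT).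
have [y1 py1] : exists y, py y != 0.
  have [x [y [_ [_ [_ [pxy1 _ _ _]]]]]] := exists_positive_prefix sch.
  by exists y; apply: sumr_neq0_of pxy1.
have [s [u0 su0 [s_ge0 card_s keep s_le]]] :=
  channel_support_reduction pu_ch py_ge0 (fun i : 'I_5 => score_at_U dx dz xhat zhat P i)
    (ex_intro _ y1 py1).
pose pu' := rescaled_channel pu py s u0.
have sch' : is_scheme pu' pv pw by split=> //; exact: channel_rescaled.
have P'E o : joint pxy pzx pu' pv pw o = s (oU o) * P o.
  case: o => [[[[[x y] z] u] v] w] /=.
  transitivity (pxy x y * pzx x z * pv u z v * pw u v x w * pu' y u); first ring.
  rewrite mul_rescaled_channel //; first ring.
  by move=> /(py0 x) ->; rewrite !mul0r.
have PE o : P o = output_support pu py (oU o) * P o.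
  case: o => [[[[[x y] z] u] v] w] /=.
  transitivity (pxy x y * pzx x z * pv u z v * pw u v x w * pu y u); first ring.
  rewrite (mul_output_support pu_ch py_ge0); first ring.
  by move=> /(py0 x) ->; rewrite !mul0r.
exists ({u | s u != 0} : finType); split; first by rewrite card_nonzero_sig.
apply: (achievable_restrict val_inj (@inj_id _) (@inj_id _) (xhat := xhat) (zhat := zhat) sch')
  => //.
- by move=> y u /nonzero_sig_off su; exact: rescaled_channel_eq0 su0 su.
- by move=> u z v /(_ v); rewrite eqxx.
- by move=> u v x w /(_ w); rewrite eqxx.
move=> i; apply: le_trans (ok i).
rewrite (score_rescaleU dx dz xhat zhat s_ge0 P'E (same_law_xyz pxy pzx sch sch')).
rewrite [X in _ <= X](score_rescaleU dx dz xhat zhat (output_support_ge0 pu py) PE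
  (fun m => erefl)).
exact: s_le.
Qed.

Lemma reduce_V (U V W : finType) r :
  achievable pxy pzx dx dz Dx Dz U V W r ->
  exists V' : finType, (#|V'| <= #|Z| * #|U| + 3)%N /\ achievable pxy pzx dx dz Dx Dz U V' W r.
Proof.
move=> /achievableP[pu [pv [pw [xhat [zhat [sch ok]]]]]]; have [pu_ch pv_ch pw_ch] := sch.
pose P := joint pxy pzx pu pv pw.
pose pre x y z u := pxy x y * pzx x z * pu y u.
have pre_ge0 x y z u : 0 <= pre x y z u.
  rewrite /pre; apply: mulr_ge0; [apply: mulr_ge0|];
    [exact: pxy_ge0 | exact: channel_ge0 pzx_ch | exact: channel_ge0 pu_ch].
pose q (uz : U * Z) := \sum_x \sum_y pre x y uz.2 uz.1.
have q_ge0 uz : 0 <= q uz by apply: sumr_ge0 => x _; apply: sumr_ge0.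
have q0 x y z u : q (u, z) = 0 -> pre x y z u = 0.
  move=> /(psumr_eq0P (fun x _ => sumr_ge0 _ (fun y _ => pre_ge0 x y z u))) /(_ x isT).
  by move=> /(psumr_eq0P (fun y _ => pre_ge0 x y z u)) /(_ y isT).
have [uz1 quz1] : exists uz, q uz != 0.
  have [x [y [z [u [_ [pxy1 pzx1 pu1 _]]]]]] := exists_positive_prefix sch.
  exists (u, z); apply: (sumr_neq0_of (t := x)) => [x'|]; first exact: sumr_ge0.
  by apply: (sumr_neq0_of (t := y)) => //; rewrite !mulf_neq0.
pose k (uz : U * Z) := pv uz.1 uz.2.
have k_ch : channel k by move=> [u z]; exact: pv_ch.
have [s [v0 sv0 [s_ge0 card_s keep s_le]]] :=
  channel_support_reduction k_ch q_ge0 (fun i : 'I_4 => score_at_V dx dz xhat zhat P i)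
    (ex_intro _ uz1 quz1).
pose pv' u z := rescaled_channel k q s v0 (u, z).
have sch' : is_scheme pu pv' pw by split=> // u z; exact: channel_rescaled.
have P'E o : joint pxy pzx pu pv' pw o = s (oV o) * P o.
  case: o => [[[[[x y] z] u] v] w] /=.
  transitivity (pre x y z u * pw u v x w * pv' u z v); first by rewrite /pre; ring.
  rewrite mul_rescaled_channel //; first by rewrite /pre /k; ring.
  by move=> /(q0 x y) ->; rewrite mul0r.
have PE o : P o = output_support k q (oV o) * P o.
  case: o => [[[[[x y] z] u] v] w] /=.
  transitivity (pre x y z u * pw u v x w * k (u, z) v); first by rewrite /pre /k; ring.
  rewrite (mul_output_support k_ch q_ge0); first by rewrite /pre /k; ring.
  by move=> /(q0 x y) ->; rewrite mul0r.
have [lin' const'] := score_rescaleV dx dz xhat zhat s_ge0 P'E (same_law_xyzu pxy pzx sch sch').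
have [lin _] := score_rescaleV dx dz xhat zhat (output_support_ge0 k q) PE (fun m => erefl).
exists ({v | s v != 0} : finType); split.
  by rewrite card_nonzero_sig mulnC -card_prod.
apply: (achievable_restrict (@inj_id _) val_inj (@inj_id _) (xhat := xhat) (zhat := zhat) sch')
  => //.
- by move=> y u /(_ u); rewrite eqxx.
- by move=> u z v /nonzero_sig_off sv; exact: rescaled_channel_eq0 sv0 sv.
- by move=> u v x w /(_ w); rewrite eqxx.
move=> i; apply: le_trans (ok i); have [lt_i4|ge_i4] := ltnP i 4.
  by rewrite (lin' (Ordinal lt_i4)) (lin (Ordinal lt_i4)); exact: s_le.
have -> : nat_of_ord i = 4 by apply/eqP; rewrite eqn_leq ge_i4 -ltnS ltn_ord.
by rewrite const'.
Qed.

Lemma reduce_W (U V W : finType) r :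
  achievable pxy pzx dx dz Dx Dz U V W r ->
  exists W' : finType,
    (#|W'| <= #|U| * #|V| * #|X| + 1)%N /\ achievable pxy pzx dx dz Dx Dz U V W' r.
Proof.
move=> /achievableP[pu [pv [pw [xhat [zhat [sch ok]]]]]]; have [pu_ch pv_ch pw_ch] := sch.
pose P := joint pxy pzx pu pv pw.
pose pre x y z u v := pxy x y * pzx x z * pu y u * pv u z v.
have pre_ge0 x y z u v : 0 <= pre x y z u v.
  rewrite /pre; apply: mulr_ge0; [apply: mulr_ge0; [apply: mulr_ge0|]|];
    [exact: pxy_ge0 | exact: channel_ge0 pzx_ch | exact: channel_ge0 pu_ch |
     exact: channel_ge0 (pv_ch _)].
pose q (uvx : U * V * X) := \sum_y \sum_z pre uvx.2 y z uvx.1.1 uvx.1.2.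
have q_ge0 uvx : 0 <= q uvx by apply: sumr_ge0 => y _; apply: sumr_ge0.
have q0 x y z u v : q (u, v, x) = 0 -> pre x y z u v = 0.
  move=> /(psumr_eq0P (fun y _ => sumr_ge0 _ (fun z _ => pre_ge0 x y z u v))) /(_ y isT).
  by move=> /(psumr_eq0P (fun z _ => pre_ge0 x y z u v)) /(_ z isT).
have [uvx1 quvx1] : exists uvx, q uvx != 0.
  have [x [y [z [u [v [pxy1 pzx1 pu1 pv1]]]]]] := exists_positive_prefix sch.
  exists (u, v, x); apply: (sumr_neq0_of (t := y)) => [y'|]; first exact: sumr_ge0.
  by apply: (sumr_neq0_of (t := z)) => //; rewrite !mulf_neq0.
pose k (uvx : U * V * X) := pw uvx.1.1 uvx.1.2 uvx.2.
have k_ch : channel k by move=> [[u v] x]; exact: pw_ch.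
have [s [w0 sw0 [s_ge0 card_s keep s_le]]] :=
  channel_support_reduction k_ch q_ge0 (fun i : 'I_2 => score_at_W dx xhat P i)
    (ex_intro _ uvx1 quvx1).
pose pw' u v x := rescaled_channel k q s w0 (u, v, x).
have sch' : is_scheme pu pv pw' by split=> // u v x; exact: channel_rescaled.
have P'E o : joint pxy pzx pu pv pw' o = s (oW o) * P o.
  case: o => [[[[[x y] z] u] v] w] /=.
  transitivity (pre x y z u v * pw' u v x w); first by rewrite /pre.
  by rewrite mul_rescaled_channel // => /(q0 x y z) ->.
have PE o : P o = output_support k q (oW o) * P o.
  case: o => [[[[[x y] z] u] v] w] /=.
  transitivity (pre x y z u v * k (u, v, x) w); first by rewrite /pre /k.
  by rewrite [LHS](mul_output_support k_ch q_ge0) // => /(q0 x y z) ->.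
have [lin' const'] := score_rescaleW dx dz xhat zhat s_ge0 P'E (same_law_xyzuv pxy pzx sch sch').
have [lin _] := score_rescaleW dx dz xhat zhat (output_support_ge0 k q) PE (fun m => erefl).
exists ({w | s w != 0} : finType); split; first by rewrite card_nonzero_sig -!card_prod.
apply: (achievable_restrict (@inj_id _) (@inj_id _) val_inj (xhat := xhat) (zhat := zhat) sch')
  => //.
- by move=> y u /(_ u); rewrite eqxx.
- by move=> u z v /(_ v); rewrite eqxx.
- by move=> u v x w /nonzero_sig_off sw; exact: rescaled_channel_eq0 sw0 sw.
move=> i; apply: le_trans (ok i); have [lt_i2|ge_i2] := ltnP i 2.
  by rewrite (lin' (Ordinal lt_i2)) (lin (Ordinal lt_i2)); exact: s_le.
by rewrite const'.
Qed.

Lemma achievable_inhabited (U V W : finType) r :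
  achievable pxy pzx dx dz Dx Dz U V W r -> inhabited (V * W).
Proof.
move=> /achievableP[pu [pv [pw [_ [_ [sch _]]]]]]; have [_ _ pw_ch] := sch.
have [x [y [z [u [v _]]]]] := exists_positive_prefix sch.
have [w _] : exists w, pw u v x w != 0.
  by apply: sumr_nonzero; rewrite (channel_sum1 _ (pw_ch u v)) oner_eq0.
by constructor; exact: (v, w).
Qed.

End Reductions.

(** * Time sharing *)

Lemma inl_injective (T1 T2 : Type) : injective (@inl T1 T2).
Proof. by move=> ? ? []. Qed.

Lemma inr_injective (T1 T2 : Type) : injective (@inr T1 T2).
Proof. by move=> ? ? []. Qed.

Section TimeSharing.
Variables (X Y Z Xh Zh : finType) (pxy : X -> Y -> R) (pzx : X -> Z -> R).
Variables (dx : X -> Xh -> R) (dz : Z -> Zh -> R) (Dx Dz : R).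
Variables (U1 V1 W1 U2 V2 W2 : finType) (v1 : V1) (w1 : W1) (v2 : V2) (w2 : W2).
Variables (pu1 : Y -> U1 -> R) (pv1 : U1 -> Z -> V1 -> R) (pw1 : U1 -> V1 -> X -> W1 -> R).
Variables (xhat1 : U1 -> W1 -> Z -> Xh) (zhat1 : U1 -> V1 -> X -> Zh).
Variables (pu2 : Y -> U2 -> R) (pv2 : U2 -> Z -> V2 -> R) (pw2 : U2 -> V2 -> X -> W2 -> R).
Variables (xhat2 : U2 -> W2 -> Z -> Xh) (zhat2 : U2 -> V2 -> X -> Zh).
Hypotheses (sch1 : is_scheme pu1 pv1 pw1) (sch2 : is_scheme pu2 pv2 pw2).

(* The time-sharing variable is the side of [U1 + U2] on which U lies; it is
   chosen with probability (a, b). The defaults [v1], [w1], [v2], [w2] are only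
   read on outcomes of probability zero. *)
Definition left_or (T1 T2 : Type) (d : T1) (t : T1 + T2) : T1 :=
  if t is inl t1 then t1 else d.
Definition right_or (T1 T2 : Type) (d : T2) (t : T1 + T2) : T2 :=
  if t is inr t2 then t2 else d.

Definition ts_pu (a b : R) y (u : U1 + U2) : R :=
  match u with inl u => a * pu1 y u | inr u => b * pu2 y u end.

Definition ts_pv (u : U1 + U2) z (v : V1 + V2) : R :=
  match u, v with
  | inl u, inl v => pv1 u z v | inr u, inr v => pv2 u z v | _, _ => 0 end.

Definition ts_pw (u : U1 + U2) (v : V1 + V2) x (w : W1 + W2) : R :=
  match u, w with
  | inl u, inl w => pw1 u (left_or v1 v) x w
  | inr u, inr w => pw2 u (right_or v2 v) x w
  | _, _ => 0 end.

Definition ts_xhat (u : U1 + U2) (w : W1 + W2) z : Xh :=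
  match u with inl u => xhat1 u (left_or w1 w) z | inr u => xhat2 u (right_or w2 w) z end.

Definition ts_zhat (u : U1 + U2) (v : V1 + V2) x : Zh :=
  match u with inl u => zhat1 u (left_or v1 v) x | inr u => zhat2 u (right_or v2 v) x end.

Lemma is_scheme_ts a b : 0 <= a -> 0 <= b -> a + b = 1 -> is_scheme (ts_pu a b) ts_pv ts_pw.
Proof.
case: sch1 sch2 => [pu1_ch pv1_ch pw1_ch] [pu2_ch pv2_ch pw2_ch] a_ge0 b_ge0 ab1.
split=> [y|[u|u] z|[u|u] v x]; split=> [[t|t]|]; rewrite /= ?big_sumType ?big1_eq ?lexx //=;
  rewrite ?addr0 ?add0r ?channel_sum1 ?mulr_ge0 ?channel_ge0 //.
by rewrite -!big_distrr /= !channel_sum1 // !mulr1.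
Qed.

Let P := joint pxy pzx (ts_pu 2^-1 2^-1) ts_pv ts_pw.

(* Reweighting relative to the uniform mixture [P], hence the factor 2. *)
Definition ts_weight (a b : R) (u : U1 + U2) : R := if u is inl _ then 2 * a else 2 * b.

Lemma joint_ts a b o :
  joint pxy pzx (ts_pu a b) ts_pv ts_pw o = ts_weight a b (oU o) * P o.
Proof.
by case: o => [[[[[x y] z] [u|u]] v] w] /=; rewrite /P /=; field.
Qed.

Lemma ts_weight_ge0 a b u : 0 <= a -> 0 <= b -> 0 <= ts_weight a b u.
Proof. by case: u => _ /= *; rewrite mulr_ge0. Qed.

Lemma score_ts a b i : 0 <= a -> 0 <= b -> a + b = 1 ->
  score dx dz ts_xhat ts_zhat (joint pxy pzx (ts_pu a b) ts_pv ts_pw) i =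
  \sum_u ts_weight a b u * score_at_U dx dz ts_xhat ts_zhat P i u.
Proof.
move=> a_ge0 b_ge0 ab1.
have half_ge0 : 0 <= 2^-1 :> R by rewrite invr_ge0.
have halves : 2^-1 + 2^-1 = 1 :> R by field.
have law := same_law_xyz pxy pzx (is_scheme_ts half_ge0 half_ge0 halves)
  (is_scheme_ts a_ge0 b_ge0 ab1).
exact: (score_rescaleU dx dz ts_xhat ts_zhat (fun u => ts_weight_ge0 u a_ge0 b_ge0)
  (joint_ts a b) law i).
Qed.

Lemma sum_ts_weight t (c : U1 + U2 -> R) :
  \sum_u ts_weight t (1 - t) u * c u =
  t * \sum_u ts_weight 1 0 u * c u + (1 - t) * \sum_u ts_weight 0 1 u * c u.
Proof. by rewrite !big_sumType /= -!big_distrr /=; ring. Qed.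

Lemma score_ts_left i :
  score dx dz ts_xhat ts_zhat (joint pxy pzx (ts_pu 1 0) ts_pv ts_pw) i =
  score dx dz xhat1 zhat1 (joint pxy pzx pu1 pv1 pw1) i.
Proof.
rewrite -(score_pullback dx dz (@inl_injective _ _) (@inl_injective _ _) (@inl_injective _ _)
  ts_xhat ts_zhat) => [|o off].
  by apply: score_eq => -[[[[[x y] z] u] v] w] /=; rewrite mul1r.
case: o off => [[[[[x y] z] [u|u]] [v|v]] [w|w]] off /=; rewrite ?(mul0r, mulr0) //.
by have /eqP := off (x, y, z, u, v, w).
Qed.

Lemma score_ts_right i :
  score dx dz ts_xhat ts_zhat (joint pxy pzx (ts_pu 0 1) ts_pv ts_pw) i =
  score dx dz xhat2 zhat2 (joint pxy pzx pu2 pv2 pw2) i.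
Proof.
rewrite -(score_pullback dx dz (@inr_injective _ _) (@inr_injective _ _) (@inr_injective _ _)
  ts_xhat ts_zhat) => [|o off].
  by apply: score_eq => -[[[[[x y] z] u] v] w] /=; rewrite mul1r.
case: o off => [[[[[x y] z] [u|u]] [v|v]] [w|w]] off /=; rewrite ?(mul0r, mulr0) //.
by have /eqP := off (x, y, z, u, v, w).
Qed.

Lemma score_ts_convex t i : 0 <= t <= 1 ->
  score dx dz ts_xhat ts_zhat (joint pxy pzx (ts_pu t (1 - t)) ts_pv ts_pw) i =
  t * score dx dz xhat1 zhat1 (joint pxy pzx pu1 pv1 pw1) i +
  (1 - t) * score dx dz xhat2 zhat2 (joint pxy pzx pu2 pv2 pw2) i.
Proof.
case/andP=> t_ge0 t_le1; have t'_ge0 : 0 <= 1 - t by rewrite subr_ge0.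
rewrite score_ts ?subrKC // sum_ts_weight -score_ts ?addr0 // -score_ts ?add0r //.
by rewrite score_ts_left score_ts_right.
Qed.

End TimeSharing.

Definition convex_comb (t : R) (r1 r2 : R * R * R) : R * R * R :=
  (t * r1.1.1 + (1 - t) * r2.1.1, t * r1.1.2 + (1 - t) * r2.1.2, t * r1.2 + (1 - t) * r2.2).

Lemma achievable_time_sharing (X Y Z Xh Zh : finType) (pxy : X -> Y -> R) (pzx : X -> Z -> R)
    (dx : X -> Xh -> R) (dz : Z -> Zh -> R) (Dx Dz : R) (U1 V1 W1 U2 V2 W2 : finType)
    (v1 : V1) (w1 : W1) (v2 : V2) (w2 : W2) r1 r2 t :
  0 <= t <= 1 ->
  achievable pxy pzx dx dz Dx Dz U1 V1 W1 r1 -> achievable pxy pzx dx dz Dx Dz U2 V2 W2 r2 ->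
  achievable pxy pzx dx dz Dx Dz (U1 + U2)%type (V1 + V2)%type (W1 + W2)%type
    (convex_comb t r1 r2).
Proof.
move=> t01 /achievableP[pu1 [pv1 [pw1 [xh1 [zh1 [sch1 ok1]]]]]].
move=> /achievableP[pu2 [pv2 [pw2 [xh2 [zh2 [sch2 ok2]]]]]].
have /andP[t_ge0 t_le1] := t01.
apply/achievableP; exists (ts_pu pu1 pu2 t (1 - t)), (ts_pv pv1 pv2), (ts_pw v1 v2 pw1 pw2),
  (ts_xhat w1 w2 xh1 xh2), (ts_zhat v1 v2 zh1 zh2).
split=> [|i]; first by apply: is_scheme_ts; rewrite ?subr_ge0 ?subrKC.
rewrite score_ts_convex //.
have -> : score_bound Dx Dz (convex_comb t r1 r2) i =
    t * score_bound Dx Dz r1 i + (1 - t) * score_bound Dx Dz r2 i.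
  by case: i => -[|[|[|[|i]]]] _ //=; ring.
by rewrite lerD // ler_wpM2l ?subr_ge0.
Qed.

Theorem lemma1 (X Y Z Xh Zh : finType)
    (pxy : X -> Y -> R) (pzx : X -> Z -> R)
    (dx : X -> Xh -> R) (dz : Z -> Zh -> R) (Dx Dz : R) :
  pmf (fun xy : X * Y => pxy xy.1 xy.2) ->
  channel pzx ->
  (forall x xh, 0 <= dx x xh) ->
  (forall z zh, 0 <= dz z zh) ->
  (forall (r1 r2 : R * R * R) (t : R),
      region pxy pzx dx dz Dx Dz r1 -> region pxy pzx dx dz Dx Dz r2 ->
      0 <= t <= 1 ->
      region pxy pzx dx dz Dx Dz
        (t * r1.1.1 + (1 - t) * r2.1.1,
         t * r1.1.2 + (1 - t) * r2.1.2,
         t * r1.2 + (1 - t) * r2.2))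
  /\
  (forall r : R * R * R,
      region pxy pzx dx dz Dx Dz r <-> region_card pxy pzx dx dz Dx Dz r).
Proof.
(* the distortion measures need not be nonnegative *)
move=> pxy_pmf pzx_ch _ _; split.
  move=> r1 r2 t [U1 [V1 [W1 ach1]]] [U2 [V2 [W2 ach2]]] t01.
  have [[v1 w1]] := achievable_inhabited pxy_pmf pzx_ch ach1.
  have [[v2 w2]] := achievable_inhabited pxy_pmf pzx_ch ach2.
  exists (U1 + U2)%type, (V1 + V2)%type, (W1 + W2)%type.
  exact: (achievable_time_sharing v1 w1 v2 w2 t01 ach1 ach2).
move=> r; split=> [[U [V [W ach]]]|[U [V [W [_ _ _ ach]]]]]; last by exists U, V, W.
have [U' [card_U' ach']] := reduce_U pxy_pmf pzx_ch ach.
have [V' [card_V' ach'']] := reduce_V pxy_pmf pzx_ch ach'.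
have [W' [card_W' ach''']] := reduce_W pxy_pmf pzx_ch ach''.
by exists U', V', W'.
Qed.
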